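(* Every equal-neighbor matrix $P\in\mathbb{R}^{n\times n}$ satisfies, for all $k\in\mathbb{N}$, $$\Big\|\tfrac1nP^k\Big\|_1\le 2\,\Big\|\tfrac1nP\Big\|_1^{1/2}.$$
   Context: An $n\times n$ matrix $P$ is equal-neighbor if $P=\mathrm{diag}(W\mathbf{1}_n)^{-1}W$ for some symmetric matrix $W\in\{0,1\}^{n\times n}$ with at least one nonzero entry in each row (diagonal entries allowed). For a nonnegative matrix $A$, $\|A\|_1=\max_j\sum_iA_{ij}$ (maximum column sum). *)

From HB Require Import structures.
From mathcomp Require Import all_boot all_order all_algebra.
From mathcomp Require Import reals.
Set Implicit Arguments. Unset Strict Implicit. Unset Printing Implicit Defensive.
Import Order.TTheory GRing.Theory Num.Theory.
Local Open Scope ring_scope.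

Definition mxpow (R : realType) (n : nat) (A : 'M[R]_n) (k : nat) : 'M[R]_n :=
  iter k (mulmx A) 1%:M.

(* ||A||_1 = maximum column sum (the paper applies it to nonnegative matrices). *)
Definition norm1 (R : realType) (n : nat) (A : 'M[R]_n) : R :=
  \big[Num.max/0]_(j < n) \sum_(i < n) A i j.

Definition equal_neighbor (R : realType) (n : nat) (P : 'M[R]_n) : Prop :=
  exists W : 'M[R]_n,
    [/\ forall i j, W i j = 0 \/ W i j = 1,
        W^T = W,
        forall i, exists j, W i j != 0
      & P = invmx (diag_mx (\row_i (\sum_j W i j))) *m W].

From HB Require Import structures.
From mathcomp Require Import all_boot all_order all_algebra.
From mathcomp Require Import reals.
From mathcomp Require Import ring lra.
Set Implicit Arguments. Unset Strict Implicit. Unset Printing Implicit Defensive.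
Import Order.TTheory GRing.Theory Num.Theory.
Local Open Scope ring_scope.

(* With degrees d_i = sum_j W_ij, the matrix P = D^-1 W is stochastic and
   reversible for d (d_i P_il = W_il = d_l P_li), hence a contraction for the
   weighted energy sum_i d_i v_i^2, by Jensen's inequality on each row.  The
   energy of the column v = P e_j is sum_i W_ij / d_i, i.e. the column sum
   C_j of P, so every column of P^k (k >= 1) has energy at most C_j.  Since
   d_i >= 1, Cauchy-Schwarz bounds the squared column sum of P^k by n C_j,
   which gives ||P^k / n||_1 <= sqrt ||P / n||_1; for k = 0 one uses
   C_j >= 1/n instead. *)

Lemma sqr_wsum_le (R : realFieldType) (I : finType) (p x : I -> R) :
  (forall i, 0 <= p i) ->
  (\sum_i p i * x i) ^+ 2 <= (\sum_i p i) * \sum_i p i * x i ^+ 2.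
Proof.
move=> p_ge0.
(* Lagrange: sum_ij p_i p_j (x_i - x_j)^2 = 2 (sum p) (sum p x^2) - 2 (sum p x)^2. *)
have : 0 <= \sum_i \sum_j p i * p j * (x i - x j) ^+ 2.
  by apply: sumr_ge0 => i _; apply: sumr_ge0 => j _; rewrite mulr_ge0 ?sqr_ge0 ?mulr_ge0.
have -> : \sum_i \sum_j p i * p j * (x i - x j) ^+ 2 =
    \sum_i \sum_j (p i * x i ^+ 2 * p j + p i * (p j * x j ^+ 2)
                   - 2 * (p i * x i * (p j * x j))).
  by apply: eq_bigr => i _; apply: eq_bigr => j _; ring.
under eq_bigr do rewrite sumrB big_split /= -!mulr_sumr.
rewrite sumrB big_split /= -mulr_sumr -!mulr_suml expr2.
nra.
Qed.

Lemma sqr_sum_le_card (R : realFieldType) (I : finType) (x : I -> R) :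
  (\sum_i x i) ^+ 2 <= #|I|%:R * \sum_i x i ^+ 2.
Proof.
have := @sqr_wsum_le R I (fun=> 1) x (fun=> ler01).
by rewrite sumr_const !(eq_bigr _ (fun i _ => mul1r _)).
Qed.

Lemma ler_term_sum (R : realFieldType) (I : finType) (F : I -> R) j :
  (forall i, 0 <= F i) -> F j <= \sum_i F i.
Proof.
by move=> F_ge0; rewrite (bigD1 j) //= lerDl sumr_ge0.
Qed.

Lemma invr_mul_le_sqrt (R : rcfType) (N s c : R) :
  0 < N -> s ^+ 2 <= N * c -> N^-1 * s <= Num.sqrt (N^-1 * c).
Proof.
move=> N_gt0 sc; apply: le_trans (ler_norm _) _.
rewrite -sqrtr_sqr ler_wsqrtr // exprMn expr2 -mulrA.
by apply: ler_wpM2l; [rewrite invr_ge0 ltW | rewrite ler_pdivrMl].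
Qed.

Section Norm1.
Variables (R : realType) (n : nat).
Implicit Types (A : 'M[R]_n) (a c : R).

Lemma norm1_le A c : 0 <= c -> (forall j, \sum_i A i j <= c) -> norm1 A <= c.
Proof. by move=> c_ge0 colA; apply: bigmax_le. Qed.

Lemma colsum_le_norm1 A j : \sum_i A i j <= norm1 A.
Proof. exact: (le_bigmax _ (fun j => \sum_i A i j)). Qed.

Lemma colsum_scale a A j : \sum_i (a *: A) i j = a * \sum_i A i j.
Proof. by rewrite mulr_sumr; apply: eq_bigr => i _; rewrite mxE. Qed.

End Norm1.

Lemma mxpowS (R : realType) (n : nat) (A : 'M[R]_n) k i j :
  mxpow A k.+1 i j = \sum_l A i l * mxpow A k l j.
Proof. by rewrite /mxpow iterS mxE. Qed.

Definition energy (R : realType) (n : nat) (d v : 'I_n -> R) : R :=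
  \sum_i d i * v i ^+ 2.

Section ReversibleChain.
Variables (R : realType) (n : nat) (P : 'M[R]_n) (d : 'I_n -> R).
Hypotheses (P_ge0 : forall i j, 0 <= P i j) (P_row1 : forall i, \sum_j P i j = 1).
Hypotheses (d_ge0 : forall i, 0 <= d i) (P_rev : forall i j, d i * P i j = d j * P j i).

Lemma rev_stationary l : \sum_i d i * P i l = d l.
Proof.
rewrite -[d l]mulr1 -(P_row1 l) mulr_sumr.
by apply: eq_bigr => i _; rewrite P_rev.
Qed.

Lemma energy_stoch_le (v : 'I_n -> R) :
  energy d (fun i => \sum_l P i l * v l) <= energy d v.
Proof.
have jensen i : (\sum_l P i l * v l) ^+ 2 <= \sum_l P i l * v l ^+ 2.
  by rewrite -[leRHS]mul1r -(P_row1 i); apply: sqr_wsum_le.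
have -> : energy d v = \sum_i d i * \sum_l P i l * v l ^+ 2.
  rewrite /energy; under [RHS]eq_bigr do rewrite mulr_sumr.
  rewrite exchange_big /=; apply: eq_bigr => l _.
  by rewrite -rev_stationary mulr_suml; apply: eq_bigr => i _; rewrite mulrA.
by apply: ler_sum => i _; rewrite ler_wpM2l.
Qed.

Lemma energy_mxpow_col j m :
  energy d (fun i => mxpow P m.+1 i j) <= energy d (fun i => P i j).
Proof.
elim: m => [|m IHm]; first by rewrite /mxpow /= mulmx1.
apply: le_trans IHm; rewrite /energy; under eq_bigr do rewrite mxpowS.
exact: energy_stoch_le.
Qed.

End ReversibleChain.

Definition degree (R : realType) (n : nat) (W : 'M[R]_n) (i : 'I_n) : R :=
  \sum_j W i j.

Definition equal_neighbor_mx (R : realType) (n : nat) (W : 'M[R]_n) : 'M[R]_n :=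
  invmx (diag_mx (\row_i degree W i)) *m W.

Section EqualNeighbor.
Variables (R : realType) (n : nat) (W : 'M[R]_n).
Hypotheses (W01 : forall i j, W i j = 0 \/ W i j = 1) (W_sym : W^T = W).
Hypothesis W_row : forall i, exists j, W i j != 0.
Local Notation d := (degree W).
Local Notation P := (equal_neighbor_mx W).

Let W_ge0 i j : 0 <= W i j. Proof. by case: (W01 i j) => ->. Qed.

Let W_sqr i j : W i j ^+ 2 = W i j.
Proof. by case: (W01 i j) => ->; rewrite ?expr0n ?expr1n. Qed.

Let WC i j : W i j = W j i. Proof. by rewrite -{1}W_sym mxE. Qed.

Let W_row1 i : exists j, W i j = 1.
Proof.
by have [j Wij] := W_row i; exists j; case: (W01 i j) Wij => ->; rewrite ?eqxx.
Qed.

Lemma degree_ge1 i : 1 <= d i.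
Proof. by have [j <-] := W_row1 i; apply: ler_term_sum. Qed.

Lemma degree_le i : d i <= n%:R.
Proof.
rewrite /degree -[n in n%:R]card_ord -sumr_const.
by apply: ler_sum => j _; case: (W01 i j) => ->.
Qed.

Let degree_gt0 i : 0 < d i. Proof. exact: lt_le_trans ltr01 (degree_ge1 i). Qed.
Let degree_ge0 i : 0 <= d i. Proof. exact: ltW. Qed.
Let d_neq0 i : d i != 0. Proof. exact: lt0r_neq0. Qed.

Lemma equal_neighbor_mxE i j : P i j = W i j / d i.
Proof.
have d_unit : diag_mx (\row_i d i) \in unitmx.
  by rewrite unitmxE det_diag unitfE; apply/prodf_neq0 => k _; rewrite mxE.
have := congr1 (fun M : 'M[R]_n => M i j) (mulKVmx d_unit W).
by rewrite mul_diag_mx !mxE => <-; rewrite mulrC mulKf.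
Qed.

Lemma equal_neighbor_mx_ge0 i j : 0 <= P i j.
Proof. by rewrite equal_neighbor_mxE divr_ge0. Qed.

Lemma equal_neighbor_mx_row1 i : \sum_j P i j = 1.
Proof.
under eq_bigr do rewrite equal_neighbor_mxE.
by rewrite -mulr_suml -/(degree W i) divff ?d_neq0.
Qed.

Lemma equal_neighbor_mx_rev i j : d i * P i j = d j * P j i.
Proof.
by rewrite !equal_neighbor_mxE ![d _ * _]mulrC !divfK ?d_neq0 // WC.
Qed.

Lemma energy_equal_neighbor_col j : energy d (fun i => P i j) = \sum_i P i j.
Proof.
apply: eq_bigr => i _; rewrite !equal_neighbor_mxE expr_div_n W_sqr.
by rewrite expr2 invfM mulrCA mulVKf ?d_neq0.
Qed.

Lemma colsum_equal_neighbor_ge j : 1 <= n%:R * \sum_i P i j.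
Proof.
have [l Wjl] := W_row1 j.
have P_lj : 1 <= n%:R * P l j.
  by rewrite equal_neighbor_mxE WC Wjl mul1r ler_pdivlMr // mul1r degree_le.
apply: le_trans P_lj _; apply: ler_wpM2l => //.
apply: (@ler_term_sum _ _ (fun i => P i j) l) => i; exact: equal_neighbor_mx_ge0.
Qed.

Lemma sqr_colsum_mxpow_le k j :
  (\sum_i mxpow P k i j) ^+ 2 <= n%:R * \sum_i P i j.
Proof.
case: k => [|m].
  rewrite (bigD1 j) //= big1 => [|i /negbTE ij]; last by rewrite mxE ij.
  by rewrite mxE eqxx addr0 expr1n colsum_equal_neighbor_ge.
apply: le_trans (sqr_sum_le_card _) _; rewrite card_ord ler_wpM2l //.
rewrite -energy_equal_neighbor_col.
apply: le_trans (energy_mxpow_col equal_neighbor_mx_ge0 equal_neighbor_mx_row1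
                   degree_ge0 equal_neighbor_mx_rev j m).
apply: ler_sum => i _; apply: ler_peMl; [exact: sqr_ge0 | exact: degree_ge1].
Qed.

End EqualNeighbor.

Theorem lemma7 (R : realType) (n : nat) (P : 'M[R]_n) (k : nat) :
  equal_neighbor P ->
  norm1 ((n%:R)^-1 *: mxpow P k) <= 2 * Num.sqrt (norm1 ((n%:R)^-1 *: P)).
Proof.
move=> [W [W01 W_sym W_row ->]] {P}; rewrite -/(degree W) -/(equal_neighbor_mx W).
set P := equal_neighbor_mx W.
apply: norm1_le => [|j]; first by rewrite mulr_ge0 ?sqrtr_ge0.
have n_gt0 : 0 < n%:R :> R by rewrite ltr0n (leq_ltn_trans (leq0n j) (ltn_ord j)).
rewrite colsum_scale.
apply: le_trans (invr_mul_le_sqrt n_gt0 (sqr_colsum_mxpow_le W01 W_sym W_row k j)) _.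
apply: le_trans (ler_wsqrtr (_ : _ <= norm1 (n%:R^-1 *: P))) _.
  by rewrite -colsum_scale colsum_le_norm1.
by rewrite ler_peMl ?sqrtr_ge0 // ler1n.
Qed.
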